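(* Let $r\ge2$ and let $0^r$ denote the consecutive pattern consisting of $r$ zeros. Then $|\mathbf{I}_n(0^r)|=n!$ for $1\le n<r$, and for $n\ge r$, $$|\mathbf{I}_n(0^r)|=\sum_{j=1}^{r-1}(n-j)\,|\mathbf{I}_{n-j}(0^r)|.$$
   Context: An inversion sequence of length $n$ is an integer sequence $e=e_1\dots e_n$ with $0\le e_i<i$ for all $i$; $\mathbf{I}_n$ denotes the set of these. $e$ avoids the consecutive pattern $0^r$ if there is no $i$ with $e_i=e_{i+1}=\dots=e_{i+r-1}$; $\mathbf{I}_n(0^r)$ is the set of $e\in\mathbf{I}_n$ avoiding $0^r$. *)

From mathcomp Require Import all_boot.
Set Implicit Arguments. Unset Strict Implicit. Unset Printing Implicit Defensive.

(* An inversion sequence of length n, stored 0-indexed: e = e_1 ... e_n with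
   e_{i+1} = nth 0 e i, and the condition 0 <= e_{i+1} < i+1. *)
Definition is_inv_seq (e : seq nat) : bool :=
  all (fun i => nth 0 e i < i.+1) (iota 0 (size e)).

Definition contains_0r (r : nat) (e : seq nat) : bool :=
  has (fun i => (i + r <= size e) &&
                all (fun k => nth 0 e (i + k) == nth 0 e i) (iota 0 r))
      (iota 0 (size e)).

Definition avoids_0r (r : nat) (e : seq nat) : bool := ~~ contains_0r r e.

(* I_n(0^r) as a finite set of n-tuples over 'I_n (each entry e_i < i <= n). *)
Definition Inv_avoid (n r : nat) : {set n.-tuple 'I_n} :=
  [set e : n.-tuple 'I_n |
     is_inv_seq (map val (val e)) && avoids_0r r (map val (val e))].

From mathcomp Require Import all_boot zify.

(* Every inversion sequence of length n+1 is uniquely an inversion sequence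
   e of length n followed by a last letter x <= n, so we enumerate I_n by the
   list [invseq n] built with [rcons], and |I_n(0^r)| becomes the number of
   its members avoiding 0^r.  Appending x to e can only create an occurrence
   of 0^r at the very end, i.e. e x avoids 0^r iff e does and the final run
   of x's in e x is shorter than r.  We therefore split the avoiders of
   length n according to the length j (1 <= j < r) of their final run:
   - a final run of length 1 arises from any avoider of length n-1 followed
     by one of the n-1 letters different from its last letter;
   - a final run of length j+1 arises from an avoider of length n-1 with a
     final run of length j, by repeating its last letter.
   Hence there are (n-j) |I_{n-j}(0^r)| avoiders of length n whose final run
   has length j, which gives the recurrence.  For n < r nothing can contain
   0^r, so |I_n(0^r)| = |I_n| = n!. *)

Lemma is_inv_seq_rcons (e : seq nat) (x : nat) :
  is_inv_seq (rcons e x) = is_inv_seq e && (x < (size e).+1).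
Proof.
rewrite /is_inv_seq size_rcons -addn1 iotaD add0n cats1 all_rcons.
rewrite nth_rcons ltnn eqxx andbC addn1; congr (_ && _).
by apply: eq_in_all => i; rewrite mem_iota /= => hi; rewrite nth_rcons hi.
Qed.

Lemma contains_0rP (r : nat) (e : seq nat) : 0 < r ->
  reflect (exists s1 v s2, e = s1 ++ nseq r v ++ s2) (contains_0r r e).
Proof.
move=> r_gt0; apply: (iffP hasP).
- move=> [i _ /andP[ir_le /allP run_i]].
  exists (take i e), (nth 0 e i), (drop (i + r) e).
  rewrite -{1}(cat_take_drop i e); congr (_ ++ _).
  rewrite -{1}(cat_take_drop r (drop i e)) drop_drop addnC; congr (_ ++ _).
  have size_factor : size (take r (drop i e)) = r.
    by rewrite size_take size_drop; case: ltnP => //; lia.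
  apply: (@eq_from_nth _ 0) => [|k]; first by rewrite size_factor size_nseq.
  rewrite size_factor => k_lt_r.
  rewrite nth_take // nth_drop nth_nseq k_lt_r; apply/eqP/run_i.
  by rewrite mem_iota.
- move=> [s1 [v [s2 ->]]]; exists (size s1).
    by rewrite mem_iota /= !size_cat size_nseq; lia.
  rewrite !size_cat size_nseq addnA leq_addr /=; apply/allP => k.
  rewrite mem_iota /= => k_lt_r.
  rewrite (nth_cat 0 s1) ltnNge leq_addr /= addKn (nth_cat 0 s1) ltnn subnn.
  by rewrite !(nth_cat 0 (nseq r v)) size_nseq k_lt_r r_gt0 !nth_nseq k_lt_r r_gt0.
Qed.

Lemma short_avoids_0r (r : nat) (e : seq nat) : size e < r -> avoids_0r r e.
Proof. by move=> short; apply/hasP => [[i _ /andP[long _]]]; lia. Qed.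

Definition trail_run (x : nat) (e : seq nat) : nat := find (predC1 x) (rev e).

Lemma trail_run_rcons (x y : nat) (e : seq nat) :
  trail_run x (rcons e y) = if y == x then (trail_run x e).+1 else 0.
Proof. by rewrite /trail_run rev_rcons /=; case: eqP. Qed.

Lemma trail_run_cat_nseq (x k : nat) (s : seq nat) :
  k <= trail_run x (s ++ nseq k x).
Proof.
rewrite /trail_run rev_cat rev_nseq find_cat has_nseq /= eqxx andbF.
by rewrite size_nseq leq_addr.
Qed.

Lemma trail_run_split (x : nat) (e : seq nat) :
  exists s, e = s ++ nseq (trail_run x e) x.
Proof.
elim/last_ind: e => [|e y [s def_e]]; first by exists [::].
rewrite trail_run_rcons; case: (y =P x) => [->|_]; last first.
  by exists (rcons e y); rewrite cats0.
by exists s; rewrite {1}def_e -cats1 -catA -[[:: x]]/(nseq 1 x) -nseqD addn1.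
Qed.

Lemma contains_0r_rcons (r : nat) (e : seq nat) (x : nat) : 0 < r ->
  contains_0r r (rcons e x) = contains_0r r e || (r <= trail_run x (rcons e x)).
Proof.
move=> r_gt0; apply/(contains_0rP _ _ r_gt0)/idP.
- move=> [s1 [v [s2 def_ex]]]; case/lastP: s2 def_ex => [|s2 y] def_ex.
  + have v_x : v = x.
      have := congr1 (last 0) def_ex; rewrite last_rcons cats0 last_cat.
      have last_nseq y : last y (nseq r v) = v.
        by case: (r) r_gt0 => // r' _; elim: r'.
      by rewrite last_nseq.
    by rewrite def_ex cats0 v_x trail_run_cat_nseq orbT.
  + move: def_ex; rewrite -!rcons_cat => /rcons_inj [def_e _].
    by apply/orP; left; apply/(contains_0rP _ _ r_gt0); exists s1, v, s2.
- case/orP => [/(contains_0rP _ _ r_gt0) [s1 [v [s2 ->]]]|long_run].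
    by exists s1, v, (rcons s2 x); rewrite -!rcons_cat.
  have [s def_ex] := trail_run_split x (rcons e x).
  exists (s ++ nseq (trail_run x (rcons e x) - r) x), x, [::].
  by rewrite {1}def_ex cats0 -catA -nseqD subnK.
Qed.

Lemma avoids_0r_rcons (r : nat) (e : seq nat) (x : nat) : 0 < r ->
  avoids_0r r (rcons e x) = avoids_0r r e && ((trail_run x e).+1 < r).
Proof.
move=> r_gt0; rewrite /avoids_0r contains_0r_rcons // trail_run_rcons eqxx.
by rewrite negb_or -ltnNge.
Qed.

(* The length of the final run of e (0 for the empty sequence). *)
Definition last_run (e : seq nat) : nat := trail_run (last 0 e) e.

Lemma last_run_rcons (e : seq nat) (x : nat) :
  last_run (rcons e x) = (trail_run x e).+1.
Proof. by rewrite /last_run last_rcons trail_run_rcons eqxx. Qed.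

Lemma trail_runE (x : nat) (e : seq nat) :
  trail_run x e = if x == last 0 e then last_run e else 0.
Proof.
case/lastP: e => [|e y]; first by case: eqP.
rewrite last_run_rcons last_rcons trail_run_rcons eq_sym.
by case: eqP => // ->.
Qed.

Lemma last_run_gt0 (e : seq nat) : e != [::] -> 0 < last_run e.
Proof. by case/lastP: e => // e y _; rewrite last_run_rcons. Qed.

Lemma avoids_last_run (r : nat) (e : seq nat) :
  0 < r -> avoids_0r r e -> last_run e < r.
Proof.
move=> r_gt0; case/lastP: e => [|e y]; first by [].
by rewrite avoids_0r_rcons // last_run_rcons => /andP[].
Qed.

Fixpoint invseq (n : nat) : seq (seq nat) :=
  if n is m.+1 then [seq rcons e x | e <- invseq m, x <- iota 0 m.+1]
  else [:: [::]].

Lemma mem_invseq (n : nat) (e : seq nat) :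
  (e \in invseq n) = (size e == n) && is_inv_seq e.
Proof.
elim: n e => [|n IHn] e; first by case: e.
apply/allpairsP/idP.
- move=> [[e' x] /= [inv_e' x_in ->]].
  move: inv_e'; rewrite IHn => /andP[/eqP size_e' inv_e'].
  rewrite size_rcons size_e' eqxx is_inv_seq_rcons inv_e' size_e' /=.
  by move: x_in; rewrite -[0 :: _]/(iota 0 n.+1) mem_iota.
- case/lastP: e => [|e x] //.
  rewrite size_rcons eqSS is_inv_seq_rcons => /andP[/eqP size_e /andP[inv_e x_lt]].
  exists (e, x); split => //; first by rewrite IHn size_e eqxx.
  by rewrite mem_iota -size_e.
Qed.

Lemma uniq_invseq (n : nat) : uniq (invseq n).
Proof.
elim: n => // n IHn; apply: allpairs_uniq => //; first exact: iota_uniq.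
by move=> [e x] [e' x'] _ _ /= /rcons_inj [-> ->].
Qed.

(* Hence |I_n| = n!, as there are n+1 choices for the (n+1)-st letter. *)
Lemma size_invseq (n : nat) : size (invseq n) = n`!.
Proof.
by elim: n => // n IHn; rewrite size_allpairs IHn size_iota factS mulnC.
Qed.

Lemma card_Inv_avoid (n r : nat) :
  #|Inv_avoid n r| = count (avoids_0r r) (invseq n).
Proof.
pose f (t : n.-tuple 'I_n) : seq nat := map val (val t).
have f_inj : injective f by move=> t1 t2 /(inj_map val_inj) /val_inj.
rewrite cardE -(size_map f) -size_filter; apply: perm_size.
apply: uniq_perm; first by rewrite (map_inj_uniq f_inj) enum_uniq.
  by rewrite filter_uniq // uniq_invseq.
move=> e; rewrite mem_filter mem_invseq; apply/mapP/idP.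
  move=> [t]; rewrite mem_enum inE => /andP[inv_t avoid_t] ->.
  by rewrite avoid_t inv_t /f size_map size_tuple eqxx.
move=> /andP[avoid_e /andP[/eqP size_e inv_e]].
have e_bounded : all (fun y => y < n) e.
  apply/(all_nthP 0) => i i_lt; move/allP: inv_e => /(_ i).
  by rewrite mem_iota /= => /(_ i_lt) /leq_trans; apply; rewrite -size_e.
have vals_e : map val (pmap insub e : seq 'I_n) = e.
  rewrite (pmap_filter (@insubK _ _ _)); apply/all_filterP.
  by apply: sub_all e_bounded => y; rewrite /= isSome_insub.
have size_ords : size (pmap insub e : seq 'I_n) == n.
  by rewrite -(size_map val) vals_e size_e.
exists (Tuple size_ords) => //.
by rewrite mem_enum inE /= vals_e inv_e avoid_e.
Qed.

Lemma count_allpairs_rcons (T : eqType) (Q P : pred (seq T)) (s : seq (seq T))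
    (t : seq T) (c : nat) :
  (forall e, e \in s -> count (fun x => Q (rcons e x)) t = c * P e) ->
  count Q [seq rcons e x | e <- s, x <- t] = c * count P s.
Proof.
elim: s => [|e s IHs] count_ext; first by rewrite muln0.
rewrite allpairs_cons count_cat count_map count_ext ?mem_head // IHs /=.
  by rewrite mulnDr.
by move=> e' e'_in; apply: count_ext; rewrite inE e'_in orbT.
Qed.

Lemma count_by_value (T : eqType) (a : pred T) (f : T -> nat) (m k : nat)
    (s : seq T) :
  (forall e, e \in s -> a e -> m <= f e < k) ->
  count a s = \sum_(m <= j < k) count (fun e => a e && (f e == j)) s.
Proof.
elim: s => [|e s IHs] f_range /=; first by rewrite big1.
rewrite big_split IHs /=; last first.
  by move=> e' e'_in; apply: f_range; rewrite inE e'_in orbT.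
congr (_ + _); case a_e: (a e) => /=; last by rewrite big1.
have /andP[m_le f_lt] := f_range e (mem_head _ _) a_e.
rewrite -big_mkcond sum1_count (eq_count (a2 := pred1 (f e))) => [|j]; last first.
  by rewrite /= eq_sym.
rewrite count_uniq_mem ?iota_uniq // mem_iota m_le subnKC ?f_lt //.
exact: leq_trans m_le (ltnW f_lt).
Qed.

(* The last letter of an inversion sequence is at most its length, so it is
   one of the candidate letters iota 0 (size e).+1 for the next position. *)
Lemma last_le_size (e : seq nat) : is_inv_seq e -> last 0 e <= size e.
Proof.
case/lastP: e => // e y; rewrite is_inv_seq_rcons last_rcons size_rcons.
by move=> /andP[_ /ltnW].
Qed.

Lemma count_new_run (r : nat) (e : seq nat) :
  1 < r -> is_inv_seq e -> e != [::] ->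
  count (fun x => avoids_0r r (rcons e x) && (last_run (rcons e x) == 1))
        (iota 0 (size e).+1) = size e * avoids_0r r e.
Proof.
move=> r_gt1 inv_e e_nil.
rewrite (eq_count (a2 := fun x => avoids_0r r e && (x != last 0 e))) => [|x].
  case: (avoids_0r r e); last by rewrite muln0; exact: count_pred0.
  have last_once : count_mem (last 0 e) (iota 0 (size e).+1) = 1.
    by rewrite count_uniq_mem ?iota_uniq // mem_iota ltnS last_le_size.
  have := count_predC (pred1 (last 0 e)) (iota 0 (size e).+1).
  by rewrite last_once size_iota add1n muln1 => [[]].
rewrite /= avoids_0r_rcons ?(ltnW r_gt1) // last_run_rcons eqSS trail_runE.
case: eqP => _ /=; first by rewrite (gtn_eqF (last_run_gt0 _ e_nil)) !andbF.
by rewrite r_gt1 !andbT.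
Qed.

Lemma count_extended_run (r j : nat) (e : seq nat) :
  0 < j -> j.+1 < r -> is_inv_seq e ->
  count (fun x => avoids_0r r (rcons e x) && (last_run (rcons e x) == j.+1))
        (iota 0 (size e).+1) = avoids_0r r e && (last_run e == j).
Proof.
move=> j_gt0 j_lt inv_e.
rewrite (eq_count (a2 := fun x => (avoids_0r r e && (last_run e == j))
                                  && (x == last 0 e))) => [|x].
  case: (_ && _); last exact: count_pred0.
  by rewrite count_uniq_mem ?iota_uniq // mem_iota ltnS last_le_size.
rewrite /= avoids_0r_rcons ?(ltn_trans j_gt0 (ltnW j_lt)) // last_run_rcons eqSS.
rewrite trail_runE.
case: eqP => _; last by rewrite eq_sym (gtn_eqF j_gt0) !andbF.
by case: eqP => [->|]; rewrite ?j_lt ?andbT ?andbF.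
Qed.

Definition run_count (r n j : nat) : nat :=
  count (fun e => avoids_0r r e && (last_run e == j)) (invseq n).

Lemma run_count_new (r n : nat) :
  1 < r -> 0 < n -> run_count r n.+1 1 = n * count (avoids_0r r) (invseq n).
Proof.
move=> r_gt1 n_gt0; apply: count_allpairs_rcons => e.
rewrite mem_invseq => /andP[/eqP size_e inv_e]; rewrite -size_e count_new_run //.
by apply: contraTneq n_gt0 => e_nil; rewrite -size_e e_nil.
Qed.

Lemma run_count_extend (r n j : nat) :
  0 < j -> j.+1 < r -> run_count r n.+1 j.+1 = run_count r n j.
Proof.
move=> j_gt0 j_lt; rewrite /run_count -[RHS]mul1n; apply: count_allpairs_rcons => e.
rewrite mem_invseq => /andP[/eqP size_e inv_e].
by rewrite mul1n -size_e count_extended_run.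
Qed.

(* Unwinding a final run of length j down to a fresh run of length 1. *)
Lemma run_count_formula (r n j : nat) : 1 < r -> 0 < j < r -> j < n ->
  run_count r n j = (n - j) * count (avoids_0r r) (invseq (n - j)).
Proof.
move=> r_gt1; elim: j n => // j IHj [|m] /andP[_ j_lt] // j_lt_m.
case: j IHj j_lt j_lt_m => [|j] IHj j_lt j_lt_m; first by rewrite subn1 run_count_new.
by rewrite run_count_extend // subSS IHj // (ltnW j_lt).
Qed.

Theorem mainTheorem8 (r : nat) (hr : 2 <= r) :
  (forall n : nat, 1 <= n -> n < r -> #|Inv_avoid n r| = n`!) /\
  (forall n : nat, r <= n ->
     #|Inv_avoid n r| = \sum_(1 <= j < r) (n - j) * #|Inv_avoid (n - j) r|).
Proof.
split=> n.
- move=> _ n_lt_r; rewrite card_Inv_avoid -size_invseq -count_predT.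
  apply: eq_in_count => e; rewrite mem_invseq => /andP[/eqP size_e _].
  by rewrite short_avoids_0r // size_e.
- move=> r_le_n.
  have run_range e : e \in invseq n -> avoids_0r r e -> 1 <= last_run e < r.
    rewrite mem_invseq => /andP[/eqP size_e _] avoid_e.
    rewrite avoids_last_run ?(ltnW hr) // andbT last_run_gt0 //.
    by apply: contraTneq r_le_n => e_nil; rewrite -size_e e_nil -ltnNge ltnW.
  rewrite card_Inv_avoid (count_by_value _ _ _ _ _ _ run_range).
  apply: eq_big_nat => j /andP[j_gt0 j_lt_r].
  rewrite -/(run_count r n j) run_count_formula ?j_gt0 ?card_Inv_avoid //.
  exact: leq_trans j_lt_r r_le_n.
Qed.
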